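(* Let $\sigma=\mathbb{L}(p_1,q_1;\dots;p_r,q_r)\in B_{P_r+Q_r}$ be a Lorenz braid. Index the rows of an $(P_r+Q_r)\times(P_r+Q_r)$ matrix by consecutive blocks of sizes $q_1,\dots,q_r,p_1,\dots,p_r$ (in this order) and its columns by consecutive blocks of sizes $p_1,q_1,p_2,q_2,\dots,p_r,q_r$ (in this order). Then $\beta_{P_r+Q_r}(\sigma)$ is the matrix whose blocks are as follows (with $P_0=0$): <ul> <li>for $1\le i\le r$, in the row block of size $q_i$: the block in column block $p_j$ is $t^{P_{j-1}}A_{q_i,p_j}$ if $j\le i$ and $0$ if $j>i$; the block in column block $q_j$ is $t^{P_i}I_{q_i}$ if $j=i$ and $0$ otherwise;</li> <li>for $1\le i\le r$, in the row block of size $p_i$: the block in column block $p_i$ is $I_{p_i}$, and all other blocks are $0$.</li> </ul> Here $A_{q,p}$ is the $q\times p$ matrix all of whose rows equal $(1-t)(1,t,t^2,\dots,t^{p-1})$. That is, \[ \beta_{P_r+Q_r}(\sigma)=\left(\begin{array}{cc|cc|c|cc} A_{q_1,p_1}&t^{P_1}I_{q_1}&0&0&\cdots&0&0\\ A_{q_2,p_1}&0&t^{P_1}A_{q_2,p_2}&t^{P_2}I_{q_2}&\cdots&0&0\\ \vdots&\vdots&\vdots&\vdots&&\vdots&\vdots\\ A_{q_r,p_1}&0&t^{P_1}A_{q_r,p_2}&0&\cdots&t^{P_{r-1}}A_{q_r,p_r}&t^{P_r}I_{q_r}\\\hline I_{p_1}&0&0&0&\cdots&0&0\\ 0&0&I_{p_2}&0&\cdots&0&0\\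 \vdots&\vdots&\vdots&\vdots&&\vdots&\vdots\\ 0&0&0&0&\cdots&I_{p_r}&0 \end{array}\right). \]
   Context: Braid group $B_n$: generators $\sigma_1,\dots,\sigma_{n-1}$ with the usual braid relations; $\sigma_i$ is the diagram in which the strand from the $i$-th top point to the $(i+1)$-th bottom point passes over the strand from the $(i+1)$-th top point to the $i$-th bottom point, and products correspond to stacking diagrams, the first factor on top. The Burau representation $\beta_n:B_n\to\mathrm{GL}_n(\mathbb{Z}[t,t^{-1}])$ is the homomorphism with $\beta_n(\sigma_j)=I_{j-1}\oplus\begin{pmatrix}1-t&t\\1&0\end{pmatrix}\oplus I_{n-j-1}$. Lorenz braid: given $r\ge1$ and positive integers $p_1,q_1,\dots,p_r,q_r$, set $P_j=p_1+\cdots+p_j$, $Q_j=q_1+\cdots+q_j$. $\mathbb{L}(p_1,q_1;\dots;p_r,q_r)$ is the braid on $P_r+Q_r$ strands defined by: the top row is split into a left part of $Q_r$ points and a right part of $P_r$ points; the bottom row is split, from left to right, into consecutive parts of sizes $p_1,q_1,p_2,q_2,\dots,p_r,q_r$ ($p$-parts and $q$-parts); the strands from the left top part are joined, in order, to the points of the $q$-parts, and the strands from the right top part are joined, in order, to the points of the $p$-parts (straight segments); at each crossing the strand from the left top part passes over the strand from the right top part, so the braid is positive. *)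

From mathcomp Require Import all_boot all_order all_algebra.
Set Implicit Arguments. Unset Strict Implicit. Unset Printing Implicit Defensive.
Import GRing.Theory.
Local Open Scope ring_scope.

(* Laurent polynomials are replaced by Z[t] = {poly int} (t = 'X): all Burau
   matrices of positive braids have entries in this subring. *)

(* A positive word is a seq of generator indices i (1 <= i <= n-1) for sigma_i;
   the word [:: i1; i2; ...] denotes sigma_i1 * sigma_i2 * ... (first on top). *)

Definition burau_gen (n i : nat) : 'M[{poly int}]_n :=
  \matrix_(a < n, b < n)
    if (a == i.-1 :> nat) && (b == i.-1 :> nat) then 1 - 'X
    else if (a == i.-1 :> nat) && (b == i :> nat) then 'X
    else if (a == i :> nat) && (b == i.-1 :> nat) then 1
    else if ((a == i.-1 :> nat) || (a == i :> nat)) then 0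
    else if (a == b :> nat) then 1 else 0.

Definition burau_word (n : nat) (w : seq nat) : 'M[{poly int}]_n :=
  foldr (fun i M => burau_gen n i *m M) 1%:M w.

Definition valid_word (n : nat) (w : seq nat) : bool :=
  all (fun i => (0 < i)%N && (i < n)%N) w.

(* position (0-indexed) of the strand starting at top position k, after
   following the word from top to bottom; sigma_i swaps positions i-1, i *)
Definition swap_pos (x y z : nat) : nat :=
  if z == x then y else if z == y then x else z.
Definition strand_end (w : seq nat) (k : nat) : nat :=
  foldl (fun pos i => swap_pos i.-1 i pos) k w.

Definition ninv (n : nat) (pi : nat -> nat) : nat :=
  \sum_(a < n) \sum_(b < n) ((a < b)%N && (pi b < pi a)%N).

(* w is a positive braid word whose diagram realizes the positive permutation
   braid of pi: its strands induce pi and every pair of strands crosses at most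
   once (length = number of inversions). *)
Definition realizes (n : nat) (pi : nat -> nat) (w : seq nat) : Prop :=
  valid_word n w /\ (forall k, (k < n)%N -> strand_end w k = pi k)
  /\ size w = ninv n pi.

Definition psum (s : seq nat) (j : nat) : nat := sumn (take j s).
Definition blk (s : seq nat) (x : nat) : nat :=
  find (fun i => (x < psum s i.+1)%N) (iota 0 (size s)).
Definition off (s : seq nat) (x : nat) : nat := x - psum s (blk s x).
Definition ileave (ps qs : seq nat) : seq nat :=
  flatten [seq [:: pq.1; pq.2] | pq <- zip ps qs].

(* top: Q_r left points (0..Q-1), then P_r right points.  Left strand k goes
   to the k-th point of the union of the q-parts; right strand Q+m goes to the
   m-th point of the union of the p-parts (bottom parts p1,q1,...,pr,qr). *)
Definition lorenz_perm (ps qs : seq nat) (k : nat) : nat :=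
  if (k < sumn qs)%N then (psum ps (blk qs k).+1 + k)%N
  else let m := (k - sumn qs)%N in (psum qs (blk ps m) + m)%N.

Definition lorenz_data (ps qs : seq nat) : Prop :=
  (0 < size ps)%N /\ size ps = size qs /\
  all (fun x => 0 < x)%N ps /\ all (fun x => 0 < x)%N qs.

Definition lorenz_entry (ps qs : seq nat) (a b : nat) : {poly int} :=
  let k := blk (ileave ps qs) b in
  let c := off (ileave ps qs) b in
  if (a < sumn qs)%N then
    let i := blk qs a in
    if ~~ odd k then
      (if (k./2 <= i)%N then (1 - 'X) * 'X ^+ (psum ps k./2 + c) else 0)
    else (if (k./2 == i) && (c == off qs a) then 'X ^+ (psum ps i.+1) else 0)
  else
    let m := (a - sumn qs)%N in
    if (k == (blk ps m).*2) && (c == off ps m) then 1 else 0.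

Definition lorenz_mx (ps qs : seq nat) : 'M[{poly int}]_(sumn ps + sumn qs) :=
  \matrix_(a, b) lorenz_entry ps qs a b.

(* Follow each row of the Burau matrix along the strand that starts at that top
   point: right multiplication by the generator sigma_i only touches the columns
   i-1 and i, i.e. the current positions of the two crossing strands.  Since the
   word is reduced, every letter crosses a pair of strands that is inverted in the
   Lorenz permutation, i.e. a left (over) strand with a right (under) strand, and
   the right strands never cross each other.  Hence, after every prefix, the row of
   a right strand is the unit vector at its current position, while a left strand
   a that has passed the first c right strands Q, ..., Q+c-1 has the row
   sum_(m < c) (1 - t) t^m e_(pos (Q+m)) + t^c e_(pos a).
   At the end a strand of the i-th q-block has passed the P_i right strands of the
   first i p-blocks, and reading the positions off the Lorenz permutation gives
   the announced block matrix. *)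

From mathcomp Require Import all_boot all_order all_algebra.
From mathcomp Require Import zify ring.
Set Implicit Arguments. Unset Strict Implicit. Unset Printing Implicit Defensive.
Import GRing.Theory.

Lemma psum0 s : psum s 0 = 0.
Proof. by rewrite /psum take0. Qed.

Lemma psumS s k : k < size s -> psum s k.+1 = psum s k + nth 0 s k.
Proof.
rewrite /psum; elim: s k => [|x s IH] [|k] //=; first by rewrite take0 /= addn0.
by move=> hk; rewrite IH // addnA.
Qed.

Lemma leq_psum s k k' : k <= k' -> psum s k <= psum s k'.
Proof.
rewrite /psum; elim: s k k' => [|x s IH] [|k] [|k'] //=.
by rewrite ltnS => /IH; rewrite leq_add2l.
Qed.

Lemma psum_size s : psum s (size s) = sumn s.
Proof. by rewrite /psum take_size. Qed.

Lemma psum_leq_sumn s k : psum s k <= sumn s.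
Proof.
case: (leqP k (size s)) => h; first by rewrite -psum_size leq_psum.
by rewrite /psum take_oversize // ltnW.
Qed.

Lemma blk_spec s x : x < sumn s ->
  [/\ blk s x < size s, psum s (blk s x) <= x & x < psum s (blk s x).+1].
Proof.
move=> hx; set P := fun i => x < psum s i.+1.
have hs : 0 < size s by case: s hx {P}.
have hasP : has P (iota 0 (size s)).
  apply/hasP; exists (size s).-1; first by rewrite mem_iota /=; lia.
  by rewrite /P prednK // psum_size.
have hlt : blk s x < size s by move: hasP; rewrite has_find size_iota.
split=> //; last by have := nth_find 0 hasP; rewrite -/(blk s x) nth_iota.
case e: (blk s x) => [|k]; first by rewrite psum0.
have := @before_find _ 0 P (iota 0 (size s)) k.
rewrite -/(blk s x) e ltnSn nth_iota; last by rewrite -e ltnW.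
by move=> /(_ isT); rewrite /P add0n => /negbT; rewrite -leqNgt.
Qed.

Lemma blk_off_spec s x : x < sumn s ->
  [/\ blk s x < size s, x = psum s (blk s x) + off s x & off s x < nth 0 s (blk s x)].
Proof.
move=> /blk_spec [h1 h2 h3]; split=> //; rewrite /off; first lia.
by move: h3; rewrite psumS //; lia.
Qed.

Lemma blk_psum s k c : k < size s -> c < nth 0 s k -> blk s (psum s k + c) = k.
Proof.
move=> hk hc; have hx : psum s k + c < sumn s.
  by apply: leq_trans (psum_leq_sumn s k.+1); rewrite psumS //; lia.
have [hb b1 b2] := blk_spec hx.
case: (ltngtP (blk s (psum s k + c)) k) => // hlt.
  by have := leq_psum s hlt; lia.
have := @before_find _ 0 (fun i => psum s k + c < psum s i.+1) (iota 0 (size s)) k.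
by rewrite -/(blk s _) hlt nth_iota // add0n psumS //= ltn_add2l hc => /(_ isT).
Qed.

Lemma off_psum s k c : k < size s -> c < nth 0 s k -> off s (psum s k + c) = c.
Proof. by move=> hk hc; rewrite /off blk_psum //; lia. Qed.

Lemma eq_psum_add s k c k' c' : k < size s -> c < nth 0 s k ->
  k' < size s -> c' < nth 0 s k' ->
  (psum s k + c == psum s k' + c') = (k == k') && (c == c').
Proof.
move=> hk hc hk' hc'; apply/eqP/andP => [e|[/eqP -> /eqP -> //]].
have := blk_psum hk hc; have := off_psum hk hc.
by rewrite e blk_psum // off_psum // => -> ->.
Qed.

Lemma eq_blk_off s b k c : b < sumn s -> k < size s -> c < nth 0 s k ->
  (b == psum s k + c) = (blk s b == k) && (off s b == c).
Proof.
by move=> /blk_off_spec [h1 h2 h3] hk hc; rewrite {1}h2 eq_psum_add.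
Qed.

Lemma ltn_psum_add s k c k' c' : k < k' -> k < size s -> c < nth 0 s k ->
  psum s k + c < psum s k' + c'.
Proof. by move=> hkk hk hc; have := leq_psum s hkk; rewrite psumS //; lia. Qed.

Lemma leq_blk s x y : x <= y -> y < sumn s -> blk s x <= blk s y.
Proof.
move=> hxy hy; have hx : x < sumn s by lia.
have [_ a2 a3] := blk_spec hx; have [_ b2 b3] := blk_spec hy.
by rewrite leqNgt; apply/negP => /(leq_psum s); lia.
Qed.

Section Interleave.
Variables ps qs : seq nat.
Hypothesis size_pq : size ps = size qs.

Lemma size_ileave : size (ileave ps qs) = (size ps).*2.
Proof.
elim: ps qs size_pq => [|p ps' IH] [|q qs'] //= [e].
by rewrite /ileave /= -/(ileave ps' qs') IH // doubleS.
Qed.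

Lemma nth_ileave_even j : nth 0 (ileave ps qs) j.*2 = nth 0 ps j.
Proof.
elim: ps qs size_pq j => [|p ps' IH] [|q qs'] //= e j; first by rewrite !nth_nil.
by case: j => [|j] //=; rewrite -/(ileave ps' qs') IH //; case: e.
Qed.

Lemma nth_ileave_odd j : nth 0 (ileave ps qs) j.*2.+1 = nth 0 qs j.
Proof.
elim: ps qs size_pq j => [|p ps' IH] [|q qs'] //= e j; first by rewrite !nth_nil.
by case: j => [|j] //=; rewrite -/(ileave ps' qs') IH //; case: e.
Qed.

Lemma psum_ileave_even j : psum (ileave ps qs) j.*2 = psum ps j + psum qs j.
Proof.
rewrite /psum; elim: ps qs size_pq j => [|p ps' IH] [|q qs'] //= e [|j] //=.
by rewrite -/(ileave ps' qs') IH; [lia | case: e].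
Qed.

Lemma psum_ileave_odd j : psum (ileave ps qs) j.*2.+1 = psum ps j.+1 + psum qs j.
Proof.
rewrite /psum; elim: ps qs size_pq j => [|p ps' IH] [|q qs'] //= e [|j] /=.
- by rewrite !take0 /=; lia.
- by rewrite -/(ileave ps' qs') IH; [lia | case: e].
Qed.

Lemma sumn_ileave : sumn (ileave ps qs) = sumn ps + sumn qs.
Proof.
by rewrite -psum_size size_ileave psum_ileave_even {2}size_pq !psum_size.
Qed.

Lemma ileave_odd_range k c : k < size qs -> c < nth 0 qs k ->
  k.*2.+1 < size (ileave ps qs) /\ c < nth 0 (ileave ps qs) k.*2.+1.
Proof. by rewrite size_ileave nth_ileave_odd size_pq; split=> //; lia. Qed.

Lemma ileave_even_range k c : k < size ps -> c < nth 0 ps k ->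
  k.*2 < size (ileave ps qs) /\ c < nth 0 (ileave ps qs) k.*2.
Proof. by rewrite size_ileave nth_ileave_even; split=> //; lia. Qed.

End Interleave.

Lemma swap_posK x y : involutive (swap_pos x y).
Proof. by move=> z; rewrite /swap_pos; do ![case: eqP => //=]; congruence. Qed.

Section Swap.
Variable i : nat.
Hypothesis i_gt0 : 0 < i.
Local Notation swap := (swap_pos i.-1 i).

Lemma swap_pos_left : swap i.-1 = i.
Proof. by rewrite /swap_pos eqxx. Qed.

Lemma swap_pos_right : swap i = i.-1.
Proof. by rewrite /swap_pos eqxx; case: eqP => //; lia. Qed.

Lemma swap_pos_id z : z != i.-1 -> z != i -> swap z = z.
Proof. by rewrite /swap_pos => /negbTE -> /negbTE ->. Qed.

Lemma swap_pos_ltn n z : i < n -> (swap z < n) = (z < n).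
Proof.
move=> hn; case: (eqVneq z i.-1) => [->|h1]; first by rewrite swap_pos_left; lia.
case: (eqVneq z i) => [->|h2]; first by rewrite swap_pos_right; lia.
by rewrite swap_pos_id.
Qed.

Lemma ltn_swap_pos x y : ~~ ((y == i.-1) && (x == i)) -> ~~ ((y == i) && (x == i.-1)) ->
  (swap y < swap x) = (y < x).
Proof.
move=> h1 h2.
have [ey|ny] := eqVneq y i.-1; have [ex|nx] := eqVneq x i;
have [ex'|nx'] := eqVneq x i.-1; have [ey'|ny'] := eqVneq y i; try (exfalso; lia);
rewrite ?ey ?ex ?ex' ?ey' ?eqxx /= in h1 h2 *;
rewrite ?swap_pos_left ?swap_pos_right ?(swap_pos_id nx' nx) ?(swap_pos_id ny ny') //; lia.
Qed.

End Swap.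

Lemma strand_end_rcons w i k : strand_end (rcons w i) k = swap_pos i.-1 i (strand_end w k).
Proof. by rewrite /strand_end foldl_rcons. Qed.

Lemma valid_word_rcons n w i : valid_word n (rcons w i) = valid_word n w && (0 < i < n).
Proof. by rewrite /valid_word all_rcons andbC. Qed.

Lemma valid_word_cat n w1 w2 : valid_word n (w1 ++ w2) = valid_word n w1 && valid_word n w2.
Proof. exact: all_cat. Qed.

Lemma valid_word_mid n w1 i w2 : valid_word n (w1 ++ i :: w2) -> 0 < i < n.
Proof. by move=> /allP; apply; rewrite mem_cat mem_head orbT. Qed.

Lemma strand_end_inj w : injective (strand_end w).
Proof.
elim/last_ind: w => [|w i IH] a b //.
by rewrite !strand_end_rcons => /(can_inj (swap_posK _ _)) /IH.
Qed.

Lemma strand_end_onto n w x : valid_word n w -> x < n ->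
  exists2 a, a < n & strand_end w a = x.
Proof.
elim/last_ind: w x => [x _ hx|w i IH x]; first by exists x.
rewrite valid_word_rcons => /andP [hw /andP [h1 h2]] hx.
have [a ha e] := IH (swap_pos i.-1 i x) hw ltac:(by rewrite swap_pos_ltn).
by exists a => //; rewrite strand_end_rcons e swap_posK.
Qed.

Lemma big_ord_eq_cond (R : Type) (idx : R) (op : Monoid.com_law idx) c x (G : nat -> R) :
  \big[op/idx]_(m < c) (if (m : nat) == x then G m else idx) = if x < c then G x else idx.
Proof.
case: ltnP => hx; last by rewrite big1 // => m _; case: eqP => // em; move: (ltn_ord m); lia.
rewrite (bigD1 (Ordinal hx)) //= eqxx big1 ?Monoid.mulm1 // => m.
by rewrite -val_eqE /= => /negbTE ->.
Qed.

Lemma eq_ninv n f g : (forall k, k < n -> f k = g k) -> ninv n f = ninv n g.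
Proof.
by move=> e; apply: eq_bigr => a _; apply: eq_bigr => b _; rewrite !e.
Qed.

Section NinvSwap.
Variables (s : nat -> nat) (i u v : nat).
Hypotheses (i_gt0 : 0 < i) (s_inj : injective s) (su : s u = i.-1) (sv : s v = i).
Local Notation swap := (swap_pos i.-1 i).

Lemma inversion_swap a b :
  ((a < b) && (swap (s b) < swap (s a))) + [&& a == v, b == u & v < u]
  = ((a < b) && (s b < s a)) + [&& a == u, b == v & u < v].
Proof.
have huv : u != v by apply: contra_eqN su => /eqP ->; rewrite sv; lia.
have [ilt ingt] : i.-1 < i /\ (i < i.-1) = false by lia.
case: (boolP ((a == u) && (b == v))) => [/andP [/eqP -> /eqP ->]|h1].
  rewrite su sv swap_pos_left swap_pos_right // ilt ingt (negbTE huv) !eqxx.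
  by case: (u < v).
case: (boolP ((a == v) && (b == u))) => [/andP [/eqP -> /eqP ->]|h2].
  rewrite su sv swap_pos_left swap_pos_right // ilt ingt eq_sym (negbTE huv) !eqxx.
  by case: (v < u).
rewrite ltn_swap_pos // -?su -?sv ?(inj_eq s_inj) 1?andbC //.
by rewrite !andbA (negbTE h1) (negbTE h2).
Qed.

Lemma ninv_swap n : u < n -> v < n ->
  ninv n (swap \o s) + (v < u) = ninv n s + (u < v).
Proof.
move=> hu hv.
have pair (c : bool) x y : x < n -> y < n ->
    (c : nat) = \sum_(a < n) \sum_(b < n) [&& a == x :> nat, b == y :> nat & c].
  move=> hx hy; transitivity (\sum_(a < n) if (a : nat) == x then
      \sum_(b < n) (if (b : nat) == y then (c : nat) else 0) else 0).
    by rewrite (@big_ord_eq_cond _ _ _ _ _ (fun=> _)) hx (@big_ord_eq_cond _ _ _ _ _ (fun=> _)) hy.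
  apply: eq_bigr => a _; case: eqP => _ /=; last by rewrite big1.
  by apply: eq_bigr => b _; case: eqP.
rewrite /ninv (pair (v < u) v u) // (pair (u < v) u v) // -!big_split.
apply: eq_bigr => a _; rewrite -!big_split; apply: eq_bigr => b _.
exact: inversion_swap.
Qed.

End NinvSwap.

Definition ascent_at (n : nat) (w : seq nat) (i : nat) : Prop :=
  forall a b, a < n -> b < n -> strand_end w a = i.-1 -> strand_end w b = i -> a < b.

Definition reduced_word (n : nat) (w : seq nat) : Prop :=
  valid_word n w /\ ninv n (strand_end w) = size w.

Lemma ninv_rcons n w i : valid_word n (rcons w i) ->
  ninv n (strand_end (rcons w i)) <= (ninv n (strand_end w)).+1 /\
  (ninv n (strand_end (rcons w i)) = (ninv n (strand_end w)).+1 -> ascent_at n w i).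
Proof.
rewrite valid_word_rcons => /andP [hw /andP [hi hin]].
have [u hu su] : exists2 u, u < n & strand_end w u = i.-1.
  by apply: strand_end_onto; lia.
have [v hv sv] := strand_end_onto hw hin.
have := ninv_swap hi (@strand_end_inj w) su sv hu hv.
rewrite -(@eq_ninv n (strand_end (rcons w i))); last by move=> k _; exact: strand_end_rcons.
split=> [|e a b ha hb sa sb]; first by case: ltngtP; lia.
rewrite (strand_end_inj (etrans sa (esym su))) (strand_end_inj (etrans sb (esym sv))).
by move: e; case: ltngtP => // huv; [lia | move: su; rewrite huv sv; lia].
Qed.

Lemma ninv_leq_size n w : valid_word n w -> ninv n (strand_end w) <= size w.
Proof.
elim/last_ind: w => [_|w i IH hw].
  by rewrite /ninv big1 // => a _; rewrite big1 // => b _ /=; case: ltngtP.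
have [le _] := ninv_rcons hw; move: hw; rewrite valid_word_rcons size_rcons.
by case/andP => /IH; lia.
Qed.

Lemma reduced_rcons n w i : reduced_word n (rcons w i) ->
  reduced_word n w /\ ascent_at n w i.
Proof.
case=> hwi e; have [le asc] := ninv_rcons hwi.
have hw : valid_word n w by move: hwi; rewrite valid_word_rcons => /andP [].
have := ninv_leq_size hw; rewrite size_rcons in e.
by split=> [|]; [split=> //; lia | apply: asc; lia].
Qed.

Lemma reduced_prefix n w1 w2 : reduced_word n (w1 ++ w2) -> reduced_word n w1.
Proof.
elim/last_ind: w2 => [|w2 i IH]; first by rewrite cats0.
by rewrite -rcons_cat => /reduced_rcons [/IH].
Qed.

Lemma reduced_ascent n w1 i w2 : reduced_word n (w1 ++ i :: w2) -> ascent_at n w1 i.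
Proof.
by rewrite -cat_rcons => /reduced_prefix /reduced_rcons [].
Qed.

Lemma ascent_inversion n w i a b : 0 < i -> ascent_at n w i ->
  a < b -> b < n -> strand_end w b < strand_end w a ->
  strand_end (rcons w i) b < strand_end (rcons w i) a.
Proof.
move=> hi asc hab hb h; rewrite !strand_end_rcons ltn_swap_pos //.
- by apply/andP => -[/eqP e1 /eqP e2]; have := asc b a hb (ltn_trans hab hb) e1 e2; lia.
- by apply/andP => -[/eqP e1 /eqP e2]; move: h; rewrite e1 e2; lia.
Qed.

Lemma reduced_inversion n w1 w2 a b : reduced_word n (w1 ++ w2) ->
  a < b -> b < n -> strand_end w1 b < strand_end w1 a ->
  strand_end (w1 ++ w2) b < strand_end (w1 ++ w2) a.
Proof.
elim: w2 w1 => [|i w2 IH] w1 red hab hb h; first by rewrite cats0.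
move: (red); rewrite -cat_rcons => /IH; apply=> //.
have /andP [hi _] := valid_word_mid (proj1 red).
exact: ascent_inversion hi (reduced_ascent red) hab hb h.
Qed.

Section LorenzPerm.
Variables ps qs : seq nat.
Local Notation n := (sumn ps + sumn qs).
Local Notation Q := (sumn qs).
Local Notation pi := (lorenz_perm ps qs).
Local Notation pq := (ileave ps qs).

Lemma lorenz_perm_left a : a < Q -> pi a = psum ps (blk qs a).+1 + a.
Proof. by rewrite /lorenz_perm => ->. Qed.

Lemma lorenz_perm_right m : pi (Q + m) = psum qs (blk ps m) + m.
Proof. by rewrite /lorenz_perm ltnNge leq_addr /= addKn. Qed.

Lemma lorenz_perm_right_mono m m' : m < m' -> m' < sumn ps -> pi (Q + m) < pi (Q + m').
Proof.
move=> hmm hm'; rewrite !lorenz_perm_right.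
by have := leq_psum qs (leq_blk (ltnW hmm) hm'); lia.
Qed.

Lemma lorenz_perm_inversion a b : a < b -> b < sumn ps + Q -> pi b < pi a -> a < Q <= b.
Proof.
move=> hab hb; case: (ltnP b Q) => hbQ.
  rewrite !lorenz_perm_left ?(ltn_trans hab) //.
  by have := leq_psum ps (leq_blk (ltnW hab) hbQ : (blk qs a).+1 <= (blk qs b).+1); lia.
case: (ltnP a Q) => haQ /=; first by [].
rewrite -(subnKC haQ) -(subnKC hbQ) !lorenz_perm_right.
by have := leq_psum qs (@leq_blk ps (a - Q) (b - Q) ltac:(lia) ltac:(lia)); lia.
Qed.

Hypothesis size_pq : size ps = size qs.

Lemma lorenz_perm_left_ileave a : a < Q ->
  pi a = psum pq (blk qs a).*2.+1 + off qs a.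
Proof.
move=> ha; have [_ ea _] := blk_off_spec ha.
by rewrite lorenz_perm_left // psum_ileave_odd //; lia.
Qed.

Lemma lorenz_perm_right_ileave m : m < sumn ps ->
  pi (Q + m) = psum pq (blk ps m).*2 + off ps m.
Proof.
move=> hm; have [_ em _] := blk_off_spec hm.
by rewrite lorenz_perm_right psum_ileave_even //; lia.
Qed.

Lemma lorenz_perm_cross a m : a < Q -> m < sumn ps ->
  (pi (Q + m) < pi a) = (m < psum ps (blk qs a).+1).
Proof.
move=> ha hm.
have [i1 _ i3] := blk_off_spec ha; have [j1 _ j3] := blk_off_spec hm.
have [o1 o2] := ileave_odd_range size_pq i1 i3.
have [e1 e2] := ileave_even_range size_pq j1 j3.
rewrite lorenz_perm_right_ileave // lorenz_perm_left_ileave //.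
case: (leqP (blk ps m) (blk qs a)) => h.
- rewrite ltn_psum_add ?ltnS ?leq_double //.
  have [_ -> _] := blk_off_spec hm.
  by have := leq_psum ps (h : (blk ps m).+1 <= (blk qs a).+1); rewrite psumS //; lia.
- have := ltn_psum_add (off ps m) (_ : (blk qs a).*2.+1 < (blk ps m).*2) o1 o2.
  have [_ em _] := blk_off_spec hm.
  by have := leq_psum ps (h : (blk qs a).+1 <= blk ps m); lia.
Qed.

Lemma eq_lorenz_perm_left b a : b < n -> a < Q ->
  (b == pi a) = (blk pq b == (blk qs a).*2.+1) && (off pq b == off qs a).
Proof.
move=> hb ha; have [i1 _ i3] := blk_off_spec ha.
have [o1 o2] := ileave_odd_range size_pq i1 i3.
by rewrite lorenz_perm_left_ileave // eq_blk_off // sumn_ileave.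
Qed.

Lemma eq_lorenz_perm_right b m : b < n -> m < sumn ps ->
  (b == pi (Q + m)) = (blk pq b == (blk ps m).*2) && (off pq b == off ps m).
Proof.
move=> hb hm; have [j1 _ j3] := blk_off_spec hm.
have [e1 e2] := ileave_even_range size_pq j1 j3.
by rewrite lorenz_perm_right_ileave // eq_blk_off // sumn_ileave.
Qed.

End LorenzPerm.

Local Open Scope ring_scope.

Lemma burau_word_rcons n w i : burau_word n (rcons w i) = burau_word n w *m burau_gen n i.
Proof.
rewrite /burau_word; elim: w => [|j w IH] /=; first by rewrite mulmx1 mul1mx.
by rewrite IH mulmxA.
Qed.

Lemma mul_burau_gen n (M : 'M[{poly int}]_n) i (F : nat -> {poly int}) (a b : 'I_n) :
  (0 < i < n)%N -> (forall j : 'I_n, M a j = F j) ->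
  (M *m burau_gen n i) a b =
  if b == i.-1 :> nat then F i.-1 * (1 - 'X) + F i
  else if b == i :> nat then F i.-1 * 'X else F b.
Proof.
move=> /andP [hi hn] hF; have hi1 : (i.-1 < n)%N by lia.
(* Column b of burau_gen n i is x e_(i-1) + y e_i + z e_b. *)
pose x : {poly int} := if b == i.-1 :> nat then 1 - 'X else if b == i :> nat then 'X else 0.
pose y := if b == i.-1 :> nat then 1 else 0 : {poly int}.
pose z := if (b == i.-1 :> nat) || (b == i :> nat) then 0 else 1 : {poly int}.
rewrite mxE (eq_bigr (fun j : 'I_n => (if j == i.-1 :> nat then F j * x else 0)
    + (if j == i :> nat then F j * y else 0) + (if j == b :> nat then F j * z else 0))).
  rewrite !big_split /= !(@big_ord_eq_cond _ _ _ _ _ (fun j => F j * _)) hi1 hn ltn_ord.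
  rewrite /x /y /z; case: eqP => [_|_]; first by rewrite /= !mulr0 mulr1 addr0.
  by case: eqP => [->|_] /=; rewrite ?mulr0 ?mulr1 ?addr0 ?add0r.
move=> j _; rewrite hF mxE /x /y /z.
case: (eqVneq (j : nat) i.-1) => [->|nj1]; case: (eqVneq (j : nat) i) => [ej|nj2];
  try (exfalso; lia); rewrite ?ej ?eqxx ?(negbTE nj1) ?(negbTE nj2);
  do ![case: eqP => //=]; rewrite ?mulr0 ?mulr1 ?addr0 ?add0r //; lia.
Qed.

Lemma mul_burau_gen_swap n (M : 'M[{poly int}]_n) i (F : nat -> {poly int}) (a b : 'I_n) :
  (0 < i < n)%N -> (forall j : 'I_n, M a j = F j) -> F i.-1 = 0 ->
  (M *m burau_gen n i) a b = F (swap_pos i.-1 i b).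
Proof.
move=> hin hF F0; have /andP [hi _] := hin.
rewrite (mul_burau_gen _ hin hF) F0 mul0r add0r.
case: (eqVneq (b : nat) i.-1) => [->|n1]; first by rewrite swap_pos_left.
case: (eqVneq (b : nat) i) => [->|n2]; first by rewrite swap_pos_right // mul0r.
by rewrite swap_pos_id.
Qed.

Definition left_row (s : nat -> nat) (Q c a b : nat) : {poly int} :=
  \sum_(m < c) (if b == s (Q + m)%N then (1 - 'X) * 'X ^+ m else 0)
  + (if b == s a then 'X ^+ c else 0).

Definition right_strands_before (n Q : nat) (s : nat -> nat) (a c : nat) : Prop :=
  (c <= n - Q)%N /\ forall m, (m < n - Q)%N -> (s (Q + m) < s a)%N = (m < c)%N.

Definition lorenz_rows (n Q : nat) (s : nat -> nat) (M : 'M[{poly int}]_n) : Prop :=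
  forall a : 'I_n,
  ((Q <= a)%N -> forall b : 'I_n, M a b = if b == s a :> nat then 1 else 0) /\
  ((a < Q)%N -> exists2 c, right_strands_before n Q s a c &
                           forall b : 'I_n, M a b = left_row s Q c a b).

Section BurauStep.
Variables (n Q i u v : nat) (s s' : nat -> nat) (M : 'M[{poly int}]_n).
Hypotheses (i_range : (0 < i < n)%N) (s_inj : injective s) (s'E : s' =1 swap_pos i.-1 i \o s).
Hypotheses (su : s u = i.-1) (sv : s v = i) (uQ : (u < Q)%N) (Qv : (Q <= v)%N) (vn : (v < n)%N).
Hypothesis s_right_mono : forall m m', (m < m')%N -> (m' < n - Q)%N -> (s (Q + m) < s (Q + m'))%N.

Let i_gt0 : (0 < i)%N. Proof. by case/andP: i_range. Qed.
Let eq_s (x y : nat) : (s x == s y) = (x == y). Proof. exact: inj_eq. Qed.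
Let eq_swap (b x : nat) : (b == s' x) = (swap_pos i.-1 i b == s x).
Proof. by rewrite s'E (inv_eq (swap_posK _ _)). Qed.

Lemma right_row_step (a b : 'I_n) : (Q <= a)%N ->
  (forall j : 'I_n, M a j = if j == s a :> nat then 1 else 0) ->
  (M *m burau_gen n i) a b = if b == s' a :> nat then 1 else 0.
Proof.
move=> Qa row.
rewrite (@mul_burau_gen_swap _ _ _ (fun j => if j == s a then 1 else 0) _ b i_range row).
  by rewrite /= (eq_swap b a).
by rewrite -su eq_s; case: eqP => // eau; move: uQ Qa; rewrite eau; lia.
Qed.

Lemma left_row_step_other (a : 'I_n) c : (a < Q)%N -> (a : nat) != u ->
  right_strands_before n Q s a c ->
  (forall j : 'I_n, M a j = left_row s Q c a j) ->
  right_strands_before n Q s' a c /\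
  forall b : 'I_n, (M *m burau_gen n i) a b = left_row s' Q c a b.
Proof.
move=> aQ au [hc before] row.
have na1 : s a != i.-1 by rewrite -su eq_s.
have na2 : s a != i by rewrite -sv eq_s; apply: contraTneq aQ => ->; rewrite -leqNgt.
split=> [|b].
  split=> // m hm; rewrite !s'E -before // ltn_swap_pos //.
  - by rewrite (negbTE na2) andbF.
  - by rewrite (negbTE na1) andbF.
rewrite (@mul_burau_gen_swap _ _ _ (left_row s Q c a) _ b i_range row).
  rewrite /left_row (eq_swap b a); congr (_ + _).
  by apply: eq_bigr => m _; rewrite (eq_swap b).
rewrite /left_row big1 ?add0r; first by rewrite eq_sym (negbTE na1).
by move=> m _; rewrite -su eq_s; case: eqP => // e; move: uQ; rewrite e; lia.
Qed.

Section Crossing.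
Variable c : nat.
Hypothesis u_before : right_strands_before n Q s u c.

Lemma crossing_strand : v = (Q + c)%N.
Proof.
case: u_before => _ before; have hv : (v - Q < n - Q)%N by lia.
have : (c <= v - Q)%N.
  by have := before _ hv; rewrite subnKC // su sv; case: ltnP => //; lia.
rewrite leq_eqVlt => /orP [/eqP|cv]; first lia.
have := s_right_mono cv hv; have := before c (ltn_trans cv hv).
rewrite subnKC // sv su ltnn => hc hlt.
have /s_inj : s (Q + c)%N = s u by rewrite su; lia.
by move: uQ; lia.
Qed.

Let passed m : (m < c)%N -> (s (Q + m) < i.-1)%N.
Proof. by case: u_before => hc before hm; rewrite -su before //; lia. Qed.

Let s'_passed m : (m < c)%N -> s' (Q + m)%N = s (Q + m)%N.
Proof. by move=> /passed hm; rewrite s'E /= swap_pos_id //; apply/eqP; lia. Qed.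

Let s'_crossed : s' (Q + c)%N = i.-1.
Proof. by rewrite s'E /= -crossing_strand sv swap_pos_right. Qed.

Let s'_u : s' u = i.
Proof. by rewrite s'E /= su swap_pos_left. Qed.

Lemma crossing_strands_before : right_strands_before n Q s' u c.+1.
Proof.
have [hc before] := u_before; have vc := crossing_strand.
split=> [|m hm]; first lia.
rewrite s'_u; case: (ltngtP m c) => [mc|cm|->]; last by rewrite s'_crossed; lia.
  by rewrite s'_passed //; have := passed mc; lia.
have hm' : ~~ (s (Q + m) < i.-1)%N by rewrite -su before //; lia.
have ne1 : s (Q + m)%N != i.-1 by rewrite -su (inj_eq s_inj); apply/eqP; lia.
have ne2 : s (Q + m)%N != i by rewrite -sv (inj_eq s_inj) vc; apply/eqP; lia.
have -> : (m < c.+1)%N = false by lia.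
by rewrite s'E /= swap_pos_id //; apply/negbTE; lia.
Qed.

(* The over strand at i.-1 carries t^c; crossing the under strand moves
   t^(c+1) to position i and leaves (1 - t) t^c on the under strand, now at i.-1. *)
Lemma crossing_row (a b : 'I_n) : (a : nat) = u ->
  (forall j : 'I_n, M a j = left_row s Q c u j) ->
  (M *m burau_gen n i) a b = left_row s' Q c.+1 u b.
Proof.
move=> au row; rewrite (@mul_burau_gen _ _ _ (left_row s Q c u) _ b i_range row).
have sum0 (k : nat) : (i.-1 <= k)%N ->
    \sum_(m < c) (if k == s (Q + m)%N then (1 - 'X) * 'X ^+ m else 0) = 0 :> {poly int}.
  by move=> hk; rewrite big1 // => m _; have := passed (ltn_ord m); case: eqP => //; lia.
have s'_sum : \sum_(m < c) (if (b : nat) == s' (Q + m)%N then (1 - 'X) * 'X ^+ m else 0)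
    = \sum_(m < c) (if (b : nat) == s (Q + m)%N then (1 - 'X) * 'X ^+ m else 0) :> {poly int}.
  by apply: eq_bigr => m _; rewrite s'_passed.
rewrite /left_row big_ord_recr /= s'_crossed s'_u su s'_sum.
rewrite (sum0 _ (leqnn _)) (sum0 _ (leq_pred _)) eqxx.
have [ne1 ne2] : (i == i.-1) = false /\ (i.-1 == i) = false by lia.
case: eqP => [->|_]; first by rewrite (sum0 _ (leqnn _)) ne1 ne2; ring.
case: eqP => [->|_]; first by rewrite (sum0 _ (leq_pred _)) exprSr; ring.
by rewrite !addr0.
Qed.

End Crossing.

Lemma lorenz_rows_step : lorenz_rows Q s M -> lorenz_rows Q s' (M *m burau_gen n i).
Proof.
move=> rows a; have [right left] := rows a; split.
  by move=> Qa b; apply: right_row_step => //; exact: right.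
move=> aQ; have [c before row] := left aQ.
case: (eqVneq (a : nat) u) => [au|au].
  rewrite au in before row *; exists c.+1; first exact: crossing_strands_before.
  by move=> b; apply: crossing_row.
by have [before' row'] := left_row_step_other aQ au before row; exists c.
Qed.

End BurauStep.

Lemma lorenz_rows_nil n Q : (Q <= n)%N -> lorenz_rows Q (strand_end [::]) (burau_word n [::]).
Proof.
have id_entry (a b : 'I_n) : burau_word n [::] a b = if b == a :> nat then 1 else 0.
  by rewrite mxE -val_eqE eq_sym; case: eqP.
move=> Qn a; split=> [_ b|aQ]; first exact: id_entry.
exists 0%N => [|b]; first by split=> // m _ /=; rewrite ltn0; apply/negbTE; lia.
by rewrite /left_row big_ord0 add0r id_entry.
Qed.

Section LorenzEntries.
Variables ps qs : seq nat.
Hypothesis size_pq : size ps = size qs.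
Local Notation n := (sumn ps + sumn qs)%N.
Local Notation Q := (sumn qs).
Local Notation pi := (lorenz_perm ps qs).
Local Notation pq := (ileave ps qs).

Lemma lorenz_left_row a b : (a < Q)%N -> (b < n)%N ->
  left_row pi Q (psum ps (blk qs a).+1) a b = lorenz_entry ps qs a b.
Proof.
move=> ha hb; have hb' : (b < sumn pq)%N by rewrite sumn_ileave.
rewrite /lorenz_entry ha /left_row; have [k1 _ c1] := blk_off_spec hb'.
move: k1 c1; rewrite size_ileave //.
set k := blk pq b; set c := off pq b; set i := blk qs a; set j := k./2 => k1 c1.
have hP m : (m < psum ps i.+1)%N -> (m < sumn ps)%N.
  by move=> hm; apply: leq_trans hm (psum_leq_sumn _ _).
have eq_right m : (m < psum ps i.+1)%N ->
    (b == pi (Q + m)%N) = (k == (blk ps m).*2) && (c == off ps m).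
  by move=> /hP hm; rewrite eq_lorenz_perm_right.
case: (boolP (odd k)) => hk /=.
  have ek : k = j.*2.+1 by rewrite -[LHS]odd_double_half hk.
  rewrite big1 ?add0r => [|m _]; last by rewrite eq_right //; case: eqP => //; lia.
  by rewrite eq_lorenz_perm_left // -/k -/c -/i ek eqSS (inj_eq double_inj).
have ek : k = j.*2 by rewrite -[LHS]odd_double_half (negbTE hk).
have hj : (j < size ps)%N by lia.
move: c1; rewrite ek nth_ileave_even // => c1.
rewrite eq_lorenz_perm_left // -/k -/c ek (_ : (j.*2 == i.*2.+1) = false) ?addr0; last lia.
rewrite (eq_bigr (fun m : 'I_ _ => if (m : nat) == psum ps j + c then (1 - 'X) * 'X ^+ m else 0)).
  rewrite (@big_ord_eq_cond _ _ _ _ _ (fun m => (1 - 'X) * 'X ^+ m)).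
  case: (leqP j i) => h.
    by have := leq_psum ps (h : (j.+1 <= i.+1)%N); rewrite psumS // => le; rewrite ifT //; lia.
  by have := leq_psum ps (h : (i.+1 <= j)%N) => le; rewrite ifF //; lia.
move=> m _; rewrite eq_right // eq_blk_off ?hP //.
by rewrite ek (inj_eq double_inj) eq_sym (eq_sym c).
Qed.

Lemma lorenz_right_row a b : (Q <= a < n)%N -> (b < n)%N ->
  (if b == pi a then 1 else 0) = lorenz_entry ps qs a b.
Proof.
move=> /andP [Qa an] hb; rewrite /lorenz_entry ltnNge Qa /=.
by rewrite -{1}(subnKC Qa) eq_lorenz_perm_right //; lia.
Qed.

Lemma lorenz_crossed_count a c : (a < Q)%N ->
  right_strands_before n Q pi a c -> c = psum ps (blk qs a).+1.
Proof.
move=> aQ []; rewrite addnK => hc before.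
have hP := psum_leq_sumn ps (blk qs a).+1.
have agree m : (m < sumn ps)%N -> (m < c)%N = (m < psum ps (blk qs a).+1)%N.
  by move=> hm; rewrite -before // lorenz_perm_cross.
case: (ltngtP c (psum ps (blk qs a).+1)) => // h.
  by have := agree c; rewrite ltnn h; lia.
by have := agree (psum ps (blk qs a).+1); rewrite ltnn h; lia.
Qed.

Lemma lorenz_rows_mx s M : (forall k, (k < n)%N -> s k = pi k) ->
  lorenz_rows Q s M -> M = lorenz_mx ps qs.
Proof.
move=> spi rows; apply/matrixP => a b; rewrite mxE; have [right left] := rows a.
have [ha hb] := (ltn_ord a, ltn_ord b).
case: (ltnP a Q) => aQ; last by rewrite right // spi // lorenz_right_row // aQ.
have [c [hc before] row] := left aQ.
have before' : right_strands_before n Q pi a c.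
  by split=> // m hm; rewrite -before // !spi //; lia.
rewrite row -lorenz_left_row // -(lorenz_crossed_count aQ before') /left_row spi //.
by congr (_ + _); apply: eq_bigr => m _; rewrite spi //; move: (ltn_ord m); lia.
Qed.

End LorenzEntries.

Section LorenzBraid.
Variables ps qs w : seq nat.
Local Notation n := (sumn ps + sumn qs)%N.
Local Notation Q := (sumn qs).
Local Notation pi := (lorenz_perm ps qs).
Hypothesis w_realizes : realizes n pi w.

Let w_valid : valid_word n w. Proof. by case: w_realizes. Qed.
Let w_end k : (k < n)%N -> strand_end w k = pi k. Proof. by case: w_realizes => _ [h _]; apply: h. Qed.

Lemma lorenz_word_reduced : reduced_word n w.
Proof. by case: w_realizes => hv [hend hsz]; split; rewrite // hsz; apply: eq_ninv. Qed.

Lemma lorenz_crossing w1 i w2 u v : w = w1 ++ i :: w2 -> (u < n)%N -> (v < n)%N ->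
  strand_end w1 u = i.-1 -> strand_end w1 v = i -> (u < Q <= v)%N.
Proof.
move=> ew hu hv su sv; have red := lorenz_word_reduced; rewrite ew in red.
have /andP [hi _] := valid_word_mid (proj1 red).
have uv := reduced_ascent red hu hv su sv.
have inv : (strand_end w v < strand_end w u)%N.
  rewrite ew -cat_rcons; apply: reduced_inversion uv hv _; first by rewrite cat_rcons.
  by rewrite !strand_end_rcons su sv swap_pos_left swap_pos_right //; lia.
by apply: (lorenz_perm_inversion uv hv); rewrite -!w_end.
Qed.

Lemma lorenz_right_ordered w1 w2 m m' : w = w1 ++ w2 -> (m < m')%N -> (m' < n - Q)%N ->
  (strand_end w1 (Q + m) < strand_end w1 (Q + m'))%N.
Proof.
move=> ew hmm hm'; have red := lorenz_word_reduced; rewrite ew in red.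
have ne : strand_end w1 (Q + m) != strand_end w1 (Q + m').
  by rewrite (inj_eq (@strand_end_inj _)); lia.
rewrite ltn_neqAle ne leqNgt; apply/negP => inv.
have hlt : (Q + m < Q + m')%N by lia.
have hn : (Q + m' < n)%N by lia.
have := reduced_inversion red hlt hn inv; rewrite -ew !w_end //; last lia.
have := @lorenz_perm_right_mono ps qs m m' hmm ltac:(lia); lia.
Qed.

Lemma lorenz_rows_prefix w1 w2 : w = w1 ++ w2 -> lorenz_rows Q (strand_end w1) (burau_word n w1).
Proof.
elim/last_ind: w1 w2 => [|w1 i IH] w2 ew; first exact/lorenz_rows_nil/leq_addl.
have ew' : w = w1 ++ i :: w2 by rewrite ew cat_rcons.
have hi : (0 < i < n)%N by apply: (@valid_word_mid _ w1 i w2); rewrite -ew'.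
have hw1 : valid_word n w1 by move: w_valid; rewrite ew' valid_word_cat => /andP [].
have [u hu su] : exists2 u, (u < n)%N & strand_end w1 u = i.-1.
  by apply: strand_end_onto; lia.
have [v hv sv] : exists2 v, (v < n)%N & strand_end w1 v = i.
  by apply: strand_end_onto; lia.
have /andP [uQ Qv] := lorenz_crossing ew' hu hv su sv.
rewrite burau_word_rcons; apply: (lorenz_rows_step (u := u) (v := v)) (IH _ ew') => //.
- exact: strand_end_inj.
- exact: strand_end_rcons.
- by move=> m m'; apply: lorenz_right_ordered ew'.
Qed.

End LorenzBraid.

Theorem theorem6p10 (ps qs : seq nat) (w : seq nat) :
  lorenz_data ps qs ->
  realizes (sumn ps + sumn qs) (lorenz_perm ps qs) w ->
  burau_word (sumn ps + sumn qs) w = lorenz_mx ps qs.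
Proof.
move=> [_ [size_pq _]] hw.
apply: (lorenz_rows_mx size_pq (s := strand_end w)); first by case: hw => _ [].
exact: (lorenz_rows_prefix hw (esym (cats0 w))).
Qed.
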